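(* Let $\mathcal{D}(A)$ be a straight-line drawing of a four-cycle $A$ with vertices $a_1,a_2,a_3,a_4$ and edges $e_k^A=a_ka_{k\bmod 4+1}$ ($k\in[4]$) as a simple quadrilateral. Call $e_k^A$ good if there is a point $p$ in the outer face of $\mathcal{D}(A)$ such that placing a new vertex $q$ at $p$ and joining it by straight-line segments to $a_1,a_2,a_3,a_4$ yields a planar straight-line drawing of $A+q$ in which $e_k^A$ is an edge on the outer face. Then at most two edges of $A$ are good. *)

From HB Require Import structures.
From mathcomp Require Import all_boot all_order all_algebra.
From mathcomp Require Import all_classical all_reals all_analysis.
Set Implicit Arguments. Unset Strict Implicit. Unset Printing Implicit Defensive.
Import Order.TTheory GRing.Theory Num.Theory.
Import numFieldNormedType.Exports.
Local Open Scope classical_set_scope.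
Local Open Scope ring_scope.

Section Geometry.
Variable R : realType.
Local Notation pt := (R * R)%type.

Definition seg (a b : pt) : set pt :=
  [set x | exists t : R, 0 <= t <= 1 /\
     x = ((1 - t) * a.1 + t * b.1, (1 - t) * a.2 + t * b.2)].

Definition drawing (E : Type) (ends : E -> pt * pt) : set pt :=
  [set x | exists e, seg (ends e).1 (ends e).2 x].

(* planarity of a straight-line drawing (vertex positions assumed distinct):
   two distinct edges meet exactly in their common endpoints *)
Definition planar_sl (E : Type) (ends : E -> pt * pt) : Prop :=
  forall e f : E, e <> f ->
    seg (ends e).1 (ends e).2 `&` seg (ends f).1 (ends f).2 =
    [set x | (x = (ends e).1 \/ x = (ends e).2) /\ (x = (ends f).1 \/ x = (ends f).2)].

Definition bounded_pts (S : set pt) : Prop :=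
  exists M : R, forall x, S x -> `|x.1| <= M /\ `|x.2| <= M.

Definition outer_face (D : set pt) : set pt :=
  [set p | ~ D p /\ ~ bounded_pts (@connected_component (R * R)%type (~` D) p)].

Definition succ4 (k : 'I_4) : 'I_4 := Ordinal (ltn_pmod k.+1 (isT : (0 < 4)%N)).

Definition cycle_ends (a : 'I_4 -> pt) (k : 'I_4) : pt * pt := (a k, a (succ4 k)).

(* A + q: cycle edges (inl k) and spokes q a_i (inr i) *)
Definition wheel_ends (a : 'I_4 -> pt) (q : pt) (e : 'I_4 + 'I_4) : pt * pt :=
  match e with inl k => cycle_ends a k | inr i => (q, a i) end.

Definition simple_quadrilateral (a : 'I_4 -> pt) : Prop :=
  injective a /\ planar_sl (cycle_ends a).

Definition good_edge (a : 'I_4 -> pt) (k : 'I_4) : Prop :=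
  exists p : pt,
    outer_face (drawing (cycle_ends a)) p /\
    (forall i, p <> a i) /\ planar_sl (wheel_ends a p) /\
    seg (a k) (a (succ4 k)) `<=` @closure (R * R)%type (outer_face (drawing (wheel_ends a p))).
End Geometry.

From HB Require Import structures.
From mathcomp Require Import all_boot all_order all_algebra.
From mathcomp Require Import all_classical all_reals all_analysis.
From mathcomp Require Import ring lra.
Set Implicit Arguments. Unset Strict Implicit. Unset Printing Implicit Defensive.
Import Order.TTheory GRing.Theory Num.Theory.
Import numFieldNormedType.Exports.
Local Open Scope classical_set_scope.
Local Open Scope ring_scope.

(* If [q] witnesses that [e_k] is good, the triangle [q a_k a_(k+1)] contains
   [a_(k+2)] and [a_(k+3)].  Otherwise, either the four triangles
   [q a_j a_(j+1)] are equally oriented and fan out around [q], which then lies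
   in a bounded face of [A]; or some triangle [q a_j a_(j+1)] with [j <> k]
   contains the far vertices, and then it contains the midpoint of [e_k], which
   is thus cut off from the outer face of [A + q] by two spokes and [e_j].
   If [e_k] and [e_(k+2)] were both good, the lines [a_k a_(k+3)] and
   [a_(k+1) a_(k+2)] would meet inside both triangles, i.e. the edges
   [e_(k+1)] and [e_(k+3)] would cross. *)

Lemma succ4K (j : 'I_4) : succ4 (succ4 (succ4 (succ4 j))) = j.
Proof. by apply: val_inj; case: j => [[|[|[|[|m]]]] hm]. Qed.

Lemma succ4_neq (j : 'I_4) :
  [/\ j <> succ4 j, j <> succ4 (succ4 j) & j <> succ4 (succ4 (succ4 j))].
Proof. by case: j => [[|[|[|[|?]]]] ?]; split => /(congr1 val). Qed.

Lemma ord4_succ_cases (j k : 'I_4) :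
  [\/ k = j, k = succ4 j, k = succ4 (succ4 j) | k = succ4 (succ4 (succ4 j))].
Proof.
move: j k => [[|[|[|[|?]]]] ?] [[|[|[|[|?]]]] ?] //=;
  first [by apply: Or41; apply: val_inj|by apply: Or42; apply: val_inj
        |by apply: Or43; apply: val_inj|by apply: Or44; apply: val_inj].
Qed.

Lemma ord4_three_opposite (i j k : 'I_4) : i != j -> j != k -> i != k ->
  [|| j == succ4 (succ4 i), k == succ4 (succ4 i) | k == succ4 (succ4 j)].
Proof. by move: i j k => [[|[|[|[|?]]]] ?] [[|[|[|[|?]]]] ?] [[|[|[|[|?]]]] ?]. Qed.

Lemma scaleRE (R : realType) (t r : R) : t *: r = t * r.
Proof. by []. Qed.

Ltac pt_field := apply: injective_projections => /=; rewrite ?scaleRE; field.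

Section PlaneGeometry.
Variable R : realType.
Local Notation pt := (R * R)%type.

Definition cross (u v : pt) : R := u.1 * v.2 - u.2 * v.1.
Definition orient (q x y : pt) : R := cross (x - q) (y - q).

Lemma segP (a b x : pt) : seg a b x <-> exists2 t, 0 <= t <= 1 & x = a + t *: (b - a).
Proof.
split=> [[t [t01 ->]]|[t t01 ->]]; exists t => //; first by pt_field.
by split=> //; pt_field.
Qed.

Lemma seg_start (a b : pt) : seg a b a.
Proof. by apply/segP; exists 0; rewrite ?lexx ?ler01 // scale0r addr0. Qed.

Lemma seg_end (a b : pt) : seg a b b.
Proof. by apply/segP; exists 1; rewrite ?lexx ?ler01 // scale1r addrC subrK. Qed.

Lemma seg_midpoint (a b : pt) : seg a b (2^-1 *: (a + b)).
Proof.
apply/segP; exists 2^-1; last by pt_field.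
by rewrite invr_ge0 ler0n /= invf_le1 ?ler1n ?ltr0n.
Qed.

Lemma connected_seg (a b : pt) : connected (seg a b).
Proof.
have -> : seg a b = [set a + t *: (b - a) | t in `[0, 1]].
  apply/seteqP; split => x.
    by move/segP=> [t t01 ->]; exists t => //; rewrite in_itv.
  by move=> [t t01 <-]; apply/segP; exists t; rewrite -?in_itv.
apply: connected_continuous_connected.
  exact/connected_intervalP/interval_is_interval.
apply: continuous_subspaceT => t.
apply: cvgD; first exact: cvg_cst.
by apply: cvgZl; exact: cvg_id.
Qed.

(* The coordinates of [p - q] in the basis [(x - q, y - q)]; both are [0] when
   [orient q x y = 0]. *)
Definition bary1 (q x y p : pt) : R := cross (p - q) (y - q) / orient q x y.
Definition bary2 (q x y p : pt) : R := cross (x - q) (p - q) / orient q x y.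

Definition open_tri (q x y : pt) : set pt := [set p |
  [/\ 0 < bary1 q x y p, 0 < bary2 q x y p & bary1 q x y p + bary2 q x y p < 1]].
Definition closed_tri (q x y : pt) : set pt := [set p |
  [/\ 0 <= bary1 q x y p, 0 <= bary2 q x y p & bary1 q x y p + bary2 q x y p <= 1]].
Definition halfopen_tri (q x y : pt) : set pt := [set p |
  [/\ 0 <= bary1 q x y p, 0 <= bary2 q x y p & bary1 q x y p + bary2 q x y p < 1]].

Lemma open_halfopen_tri q x y : open_tri q x y `<=` halfopen_tri q x y.
Proof. by move=> p [/ltW ? /ltW ? ?]. Qed.

Lemma halfopen_closed_tri q x y : halfopen_tri q x y `<=` closed_tri q x y.
Proof. by move=> p [? ? /ltW ?]. Qed.

Lemma open_closed_tri q x y : open_tri q x y `<=` closed_tri q x y.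
Proof. by move=> p /open_halfopen_tri /halfopen_closed_tri. Qed.

Lemma continuous_affine (c1 c2 c0 : R) :
  continuous (fun p : pt => c1 * p.1 + c2 * p.2 + c0).
Proof.
move=> p; apply: cvgD; last exact: cvg_cst.
by apply: cvgD; apply: cvgMr; [exact: cvg_fst|exact: cvg_snd].
Qed.

Lemma continuous_bary1 q x y : continuous (bary1 q x y).
Proof.
set o := orient q x y.
have -> : bary1 q x y = fun p => (y.2 - q.2) / o * p.1 + (q.1 - y.1) / o * p.2
    + (q.2 * (y.1 - q.1) - q.1 * (y.2 - q.2)) / o.
  by apply: funext => p; rewrite /bary1 /cross -/o /=; ring.
exact: continuous_affine.
Qed.

Lemma continuous_bary2 q x y : continuous (bary2 q x y).
Proof.
set o := orient q x y.
have -> : bary2 q x y = fun p => (q.2 - x.2) / o * p.1 + (x.1 - q.1) / o * p.2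
    + (q.1 * (x.2 - q.2) - q.2 * (x.1 - q.1)) / o.
  by apply: funext => p; rewrite /bary2 /cross -/o /=; ring.
exact: continuous_affine.
Qed.

Lemma open_gt0 (f : pt -> R) : continuous f -> open [set p | 0 < f p].
Proof. by move=> cf; apply: (@open_comp _ _ f [set r | 0 < r]) => [p _|]; [exact: cf|exact: open_gt]. Qed.

Lemma closed_ge0 (f : pt -> R) : continuous f -> closed [set p | 0 <= f p].
Proof. by move=> cf; apply: (@preimage_closed _ _ f [set r | 0 <= r]) => [p _|]; [exact: cf|exact: closed_ge]. Qed.

Lemma continuous_bary0 q x y : continuous (fun p => 1 - bary1 q x y p - bary2 q x y p).
Proof.
move=> p; apply: cvgB; last exact: continuous_bary2.
by apply: cvgB; [exact: cvg_cst|exact: continuous_bary1].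
Qed.

Lemma open_open_tri q x y : open (open_tri q x y).
Proof.
have -> : open_tri q x y = [set p | 0 < bary1 q x y p] `&` [set p | 0 < bary2 q x y p]
    `&` [set p | 0 < 1 - bary1 q x y p - bary2 q x y p].
  by apply/seteqP; split => p /=; [case=> *|case=> -[*]]; do ?split => //; lra.
apply: openI; [apply: openI|]; apply: open_gt0;
  [exact: continuous_bary1|exact: continuous_bary2|exact: continuous_bary0].
Qed.

Lemma closed_closed_tri q x y : closed (closed_tri q x y).
Proof.
have -> : closed_tri q x y = [set p | 0 <= bary1 q x y p] `&` [set p | 0 <= bary2 q x y p]
    `&` [set p | 0 <= 1 - bary1 q x y p - bary2 q x y p].
  by apply/seteqP; split => p /=; [case=> *|case=> -[*]]; do ?split => //; lra.
apply: closedI; [apply: closedI|]; apply: closed_ge0;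
  [exact: continuous_bary1|exact: continuous_bary2|exact: continuous_bary0].
Qed.

Section Triangle.
Variables q x y : pt.
Hypothesis oqxy : orient q x y != 0.
Local Notation b1 := (bary1 q x y).
Local Notation b2 := (bary2 q x y).

Lemma baryE p : p = q + b1 p *: (x - q) + b2 p *: (y - q).
Proof.
move: oqxy; rewrite /bary1 /bary2 /orient /cross /= => o0.
by apply: injective_projections => /=; rewrite ?scaleRE; field.
Qed.

Lemma bary_unique p s t : p = q + s *: (x - q) + t *: (y - q) -> b1 p = s /\ b2 p = t.
Proof.
move: oqxy => + ->; rewrite /bary1 /bary2 /orient /cross /= ?scaleRE => o0.
by split; field.
Qed.

Lemma bary1_orient p : b1 p * orient q x y = cross (p - q) (y - q).
Proof. exact: divfK. Qed.

Lemma bary2_orient p : b2 p * orient q x y = cross (x - q) (p - q).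
Proof. exact: divfK. Qed.

Lemma bary_apex : b1 q = 0 /\ b2 q = 0.
Proof. by apply: bary_unique; rewrite !scale0r !addr0. Qed.

Lemma bary_x : b1 x = 1 /\ b2 x = 0.
Proof. by apply: bary_unique; pt_field. Qed.

Lemma bary_y : b1 y = 0 /\ b2 y = 1.
Proof. by apply: bary_unique; pt_field. Qed.

Lemma closed_tri_x : closed_tri q x y x.
Proof. by have [e1 e2] := bary_x; split; rewrite ?e1 ?e2 ?addr0 ?ler01. Qed.

Lemma closed_tri_y : closed_tri q x y y.
Proof. by have [e1 e2] := bary_y; split; rewrite ?e1 ?e2 ?add0r ?ler01. Qed.

Lemma seg_apex_y p : b1 p = 0 -> 0 <= b2 p <= 1 -> seg q y p.
Proof.
move=> h0 h01; apply/segP; exists (b2 p) => //.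
by rewrite {1}(baryE p) h0 scale0r addr0.
Qed.

Lemma seg_apex_x p : b2 p = 0 -> 0 <= b1 p <= 1 -> seg q x p.
Proof.
move=> h0 h01; apply/segP; exists (b1 p) => //.
by rewrite {1}(baryE p) h0 scale0r addr0.
Qed.

Lemma seg_base p : b1 p + b2 p = 1 -> 0 <= b2 p <= 1 -> seg x y p.
Proof.
move=> h1 h01; apply/segP; exists (b2 p) => //.
have e : b1 p = 1 - b2 p by lra.
by rewrite {1}(baryE p) e; pt_field.
Qed.

Lemma closed_tri_boundary p : closed_tri q x y p -> ~ open_tri q x y p ->
  [\/ seg q x p, seg q y p | seg x y p].
Proof.
move=> [h1 h2 h3] np.
have [e1|p1] := eqVneq (b1 p) 0.
  by apply: Or32; apply: seg_apex_y => //; apply/andP; split; lra.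
have [e2|p2] := eqVneq (b2 p) 0.
  by apply: Or31; apply: seg_apex_x => //; apply/andP; split; lra.
apply: Or33; apply: seg_base; last by apply/andP; split; lra.
apply/eqP; rewrite eq_le h3 leNgt; apply/negP => lt1; apply: np.
by split; rewrite // lt_def ?p1 ?p2.
Qed.

Lemma closed_tri_bounded : bounded_pts (closed_tri q x y).
Proof.
exists (`|q.1| + `|q.2| + `|x.1 - q.1| + `|x.2 - q.2| + `|y.1 - q.1| + `|y.2 - q.2|).
move=> p [h1 h2 h3]; rewrite (baryE p) /= !scaleRE.
have le_norm (c r : R) : 0 <= c <= 1 -> `|c * r| <= `|r|.
  by move=> /andP[c0 c1]; rewrite normrM ger0_norm // ler_piMl.
have /le_norm n1 : 0 <= b1 p <= 1 by apply/andP; split; lra.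
have /le_norm n2 : 0 <= b2 p <= 1 by apply/andP; split; lra.
have := n1 (x.1 - q.1); have := n1 (x.2 - q.2); have := n2 (y.1 - q.1); have := n2 (y.2 - q.2).
have := ler_normD (q.1 + b1 p * (x.1 - q.1)) (b2 p * (y.1 - q.1)).
have := ler_normD q.1 (b1 p * (x.1 - q.1)).
have := ler_normD (q.2 + b1 p * (x.2 - q.2)) (b2 p * (y.2 - q.2)).
have := ler_normD q.2 (b1 p * (x.2 - q.2)).
move: (normr_ge0 q.1) (normr_ge0 q.2) (normr_ge0 (x.1 - q.1)) (normr_ge0 (x.2 - q.2)).
move: (normr_ge0 (y.1 - q.1)) (normr_ge0 (y.2 - q.2)).
by move=> *; split; lra.
Qed.

Lemma open_tri_of_bary_gt0 z : 0 < b1 z -> 0 < b2 z ->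
  (forall p, seg q z p -> seg x y p -> p = x \/ p = y) -> open_tri q x y z.
Proof.
move=> z1 z2 meet; split => //; rewrite ltNge; apply/negP => S1.
pose S := b1 z + b2 z; have S0 : 0 < S by rewrite /S; lra.
pose p := q + S^-1 *: (z - q).
have [p1 p2] : b1 p = b1 z / S /\ b2 p = b2 z / S.
  by apply: bary_unique; rewrite /p {1}(baryE z); pt_field; rewrite gt_eqF.
have : seg q z p by apply/segP; exists S^-1; rewrite // invr_ge0 ltW //= invf_le1.
have : seg x y p.
  apply: seg_base; first by rewrite p1 p2 -mulrDl divff // gt_eqF.
  by rewrite p2 divr_ge0 ?ltW //= ltr_pdivrMr // mul1r /S; lra.
move=> /[swap] /meet /[apply] -[] ep.
  by move: p2; rewrite ep (bary_x).2 => /esym/eqP; rewrite mulf_eq0 invr_eq0 !gt_eqF.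
by move: p1; rewrite ep (bary_y).1 => /esym/eqP; rewrite mulf_eq0 invr_eq0 !gt_eqF.
Qed.

(* The parameters come from Cramer's rule in the frame [(q; x - q, y - q)]. *)
Lemma cevians_meet z w : open_tri q x y z -> open_tri q x y w ->
  exists s t, [/\ 0 < s, 0 < t & x + s *: (w - x) = y + t *: (z - y)].
Proof.
move=> [z1 z2 z3] [w1 w2 w3]; move: (baryE z) (baryE w) z1 z2 z3 w1 w2 w3.
move: (b1 z) (b2 z) (b1 w) (b2 w) => A2 B2 A3 B3 -> -> *.
have D0 : 0 < (1 - A3) * (1 - B2) - B3 * A2 by nra.
exists ((1 - A2 - B2) / ((1 - A3) * (1 - B2) - B3 * A2)).
exists ((1 - A3 - B3) / ((1 - A3) * (1 - B2) - B3 * A2)); split.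
- by apply: divr_gt0 => //; lra.
- by apply: divr_gt0 => //; lra.
by move/lt0r_neq0: D0 => D0; apply: injective_projections => /=; rewrite ?scaleRE; field.
Qed.

Lemma open_tri_cross z : open_tri q x y z -> cross (y - x) (z - y) != 0.
Proof.
move=> [z1 z2 z3].
have -> : cross (y - x) (z - y) = (1 - b1 z - b2 z) * orient q x y.
  by rewrite {1}(baryE z) /orient /cross /= ?scaleRE; ring.
by rewrite mulf_neq0 // gt_eqF //; lra.
Qed.

Lemma open_tri_midpoint u w : closed_tri q x y u -> open_tri q x y w ->
  open_tri q x y (2^-1 *: (u + w)).
Proof.
move=> [u1 u2 u3] [w1 w2 w3].
have [m1 m2] : b1 (2^-1 *: (u + w)) = (b1 u + b1 w) / 2 /\
               b2 (2^-1 *: (u + w)) = (b2 u + b2 w) / 2.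
  by apply: bary_unique; rewrite {1}(baryE u) {1}(baryE w); pt_field.
by split; lra.
Qed.

End Triangle.

Lemma cross_line_meet (x w y z : pt) (s t : R) : x + s *: (w - x) = y + t *: (z - y) ->
  s * cross (w - x) (z - y) = cross (y - x) (z - y).
Proof.
move=> e; have /= := congr1 fst e; have /= := congr1 snd e; rewrite !scaleRE => e2 e1.
have -> : y - x = s *: (w - x) - t *: (z - y) by apply: injective_projections => /=; rewrite !scaleRE; lra.
by rewrite /cross /= !scaleRE; ring.
Qed.

Lemma line_param_unique (x w y z : pt) (s t s' t' : R) : cross (w - x) (z - y) != 0 ->
  x + s *: (w - x) = y + t *: (z - y) -> x + s' *: (w - x) = y + t' *: (z - y) ->
  s = s' /\ t = t'.
Proof.
move=> K0 e e'.
have /= := congr1 fst e; have /= := congr1 snd e.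
have /= := congr1 fst e'; have /= := congr1 snd e'; rewrite !scaleRE => e4 e3 e2 e1.
have d1 : (s - s') * (w.1 - x.1) = (t - t') * (z.1 - y.1) by lra.
have d2 : (s - s') * (w.2 - x.2) = (t - t') * (z.2 - y.2) by lra.
have : (s - s') * cross (w - x) (z - y) = 0.
  have -> : (s - s') * cross (w - x) (z - y) =
      (s - s') * (w.1 - x.1) * (z.2 - y.2) - (s - s') * (w.2 - x.2) * (z.1 - y.1).
    by rewrite /cross /=; ring.
  by rewrite d1 d2; ring.
have : (t - t') * cross (w - x) (z - y) = 0.
  have -> : (t - t') * cross (w - x) (z - y) =
      (t - t') * (z.2 - y.2) * (w.1 - x.1) - (t - t') * (z.1 - y.1) * (w.2 - x.2).
    by rewrite /cross /=; ring.
  by rewrite -d1 -d2; ring.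
by move=> /eqP + /eqP; rewrite !mulf_eq0 (negbTE K0) !orbF !subr_eq0 => /eqP -> /eqP ->.
Qed.

Lemma bounded_pts_bigcup (I : finType) (F : I -> set pt) :
  (forall i, bounded_pts (F i)) -> bounded_pts (\bigcup_i F i).
Proof.
move=> /choice[M hM]; exists (\big[Num.max/0]_i M i) => p [i _ /hM[p1 p2]].
by split; [apply: le_trans p1 _|apply: le_trans p2 _]; exact: le_bigmax.
Qed.

Lemma bounded_pts_sub (S T : set pt) : S `<=` T -> bounded_pts T -> bounded_pts S.
Proof. by move=> ST [M hM]; exists M => p /ST /hM. Qed.

Lemma separated_open (O E : set pt) : open O -> open E -> O `&` E = set0 ->
  separated O E.
Proof.
move=> oO oE OE0; split; apply/seteqP; split => // p [].
  by move=> cOp Ep; have := cOp E (open_nbhs_nbhs (conj oE Ep)); rewrite OE0 => -[].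
by move=> Op cEp; have := cEp O (open_nbhs_nbhs (conj oO Op)); rewrite setIC OE0 => -[].
Qed.

Lemma connected_in_or_out (S O K : set pt) : connected S -> open O -> closed K ->
  O `<=` K -> S `&` K `<=` O -> S `<=` O \/ S `<=` ~` O.
Proof.
move=> cS oO cK OK SKO.
have sep : separated O (~` K).
  apply: separated_open => //; first exact: closed_openC.
  by apply/seteqP; split => // p [/OK].
have [|SO|SK] := connected_subset sep _ cS; [|by left|by right => p /SK /[swap] /OK].
by move=> p Sp; case: (pselect (K p)) => Kp; [left; exact: SKO|right].
Qed.

Lemma enclosed_not_outer (D O K : set pt) : open O -> closed K -> bounded_pts K ->
  O `<=` K -> K `\` D `<=` O -> forall p, O p -> ~ closure (outer_face D) p.
Proof.
move=> oO cK bK OK KDO p Op /(_ O (open_nbhs_nbhs (conj oO Op))) [r [[nDr unb] Or]].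
apply: unb; apply: bounded_pts_sub bK => z [C [Cr CD cC] Cz].
have CKO : C `&` K `<=` O by move=> w [Cw Kw]; apply: KDO; split => //; exact: CD.
have [CO|] := connected_in_or_out cC oO cK OK CKO; first exact/OK/CO.
by move=> /(_ r Cr).
Qed.

Lemma same_ray_seg (q x y : pt) (c : R) : 0 < c -> y - q = c *: (x - q) ->
  seg q x y \/ seg q y x.
Proof.
move=> c0 yx; have [c1|c1] := lerP c 1.
  by left; apply/segP; exists c; [rewrite ltW|rewrite -yx addrC subrK].
right; apply/segP; exists c^-1; first by rewrite invr_ge0 ltW //= invf_le1 // ltW.
by rewrite yx scalerA mulVf ?gt_eqF // scale1r addrC subrK.
Qed.

Lemma cross_eq0_parallel (u w : pt) : u != 0 -> cross u w = 0 -> exists c, w = c *: u.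
Proof.
move=> u0; rewrite /cross => uw; pose D := u.1 ^+ 2 + u.2 ^+ 2.
have D0 : D != 0.
  apply: contra_neq u0 => /eqP; rewrite paddr_eq0 ?sqr_ge0 // !sqrf_eq0.
  by move=> /andP[/eqP u1 /eqP u2]; apply: injective_projections.
exists ((u.1 * w.1 + u.2 * w.2) / D).
apply: injective_projections => /=; rewrite scaleRE; apply: (mulIf D0);
  rewrite mulrAC divfK //; apply/eqP; rewrite -subr_eq0 /D.
- have -> : w.1 * (u.1 ^+ 2 + u.2 ^+ 2) - (u.1 * w.1 + u.2 * w.2) * u.1 =
    - u.2 * (u.1 * w.2 - u.2 * w.1) by ring.
  by rewrite uw mulr0.
- have -> : w.2 * (u.1 ^+ 2 + u.2 ^+ 2) - (u.1 * w.1 + u.2 * w.2) * u.2 =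
    u.1 * (u.1 * w.2 - u.2 * w.1) by ring.
  by rewrite uw mulr0.
Qed.

Lemma collinear_seg (q x y : pt) : x != q -> orient q x y = 0 ->
  [\/ seg x y q, seg q x y | seg q y x].
Proof.
rewrite -subr_eq0 => /cross_eq0_parallel /[apply] -[c yx].
have [c0|c0] := lerP c 0; last by case: (same_ray_seg c0 yx) => ?; [apply: Or32|apply: Or33].
apply: Or31; apply/segP; exists (1 - c)^-1; first by rewrite invr_ge0 invf_le1; lra.
have c1 : 1 - c != 0 by rewrite gt_eqF //; lra.
have -> : y - x = (c - 1) *: (x - q) by rewrite -[y](subrK q) yx; pt_field.
by rewrite scalerA; pt_field.
Qed.

Lemma cross_turn_gt0 (e : R) (u v w d : pt) : 0 < e * cross u v -> 0 < e * cross v w ->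
  0 < (e * cross u d) * (e * cross v d) -> 0 < (e * cross v d) * (e * cross w d) ->
  0 < e * cross u w.
Proof.
move=> uv vw ud wd.
have vd : 0 < (e * cross v d) * (e * cross v d).
  by rewrite lt_def mulf_neq0 ?sqr_ge0 //; move: ud; rewrite lt_def mulf_eq0 negb_or => /andP[/andP[]].
rewrite -(pmulr_lgt0 _ vd).
(* the Pluecker relation among four plane vectors *)
have -> : (e * cross u w) * ((e * cross v d) * (e * cross v d)) =
    (e * cross u v) * ((e * cross v d) * (e * cross w d))
    + (e * cross v w) * ((e * cross u d) * (e * cross v d)).
  by rewrite /cross; ring.
by apply: addr_gt0; apply: mulr_gt0.
Qed.

(* Otherwise all [cross (v j) d] share a sign, and chaining [cross_turn_gt0]
   twice gives [0 < e * cross (v 0) (v 3)], against the last turn. *)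
Lemma cones_cover (e : R) (v : 'I_4 -> pt) :
  (forall j, 0 < e * cross (v j) (v (succ4 j))) ->
  forall d, exists j, 0 <= e * cross (v j) d /\ e * cross (v (succ4 j)) d <= 0.
Proof.
move=> turn d; apply: contrapT => /forallNP none.
pose c j := e * cross (v j) d.
have step j : c j < 0 \/ 0 < c (succ4 j).
  by case: (ltP (c j) 0) => cj; [left|right; rewrite ltNge; apply/negP => ?; exact: (none j)].
pose j0 := @ord0 3; pose j1 := succ4 j0; pose j2 := succ4 j1; pose j3 := succ4 j2.
have j30 : succ4 j3 = j0 by rewrite succ4K.
have same_sign : (forall j, 0 < c j * c j0).
  case: (ltP (c j0) 0) => h0.
    have h3 : c j3 < 0 by case: (step j3); rewrite ?j30 // => ?; lra.
    have h2 : c j2 < 0 by case: (step j2) => // ?; lra.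
    have h1 : c j1 < 0 by case: (step j1) => // ?; lra.
    by move=> k; case: (ord4_succ_cases j0 k) => ->; nra.
  have h1 : 0 < c j1 by case: (step j0) => // ?; lra.
  have h2 : 0 < c j2 by case: (step j1) => // ?; lra.
  have h3 : 0 < c j3 by case: (step j2) => // ?; lra.
  have h0' : 0 < c j0 by case: (step j3); rewrite ?j30 // => ?; lra.
  by move=> k; case: (ord4_succ_cases j0 k) => ->; nra.
have pos j k : 0 < c j * c k.
  by have := same_sign j; have := same_sign k; have := same_sign j0; nra.
have t02 : 0 < e * cross (v j0) (v j2) by apply: (cross_turn_gt0 (d := d) (turn j0) (turn j1)); apply: pos.
have t03 : 0 < e * cross (v j0) (v j3) by apply: (cross_turn_gt0 (d := d) t02 (turn j2)); apply: pos.
have := turn j3; rewrite j30.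
have -> : cross (v j3) (v j0) = - cross (v j0) (v j3) by rewrite /cross; ring.
lra.
Qed.

Lemma nbhs_gt0 (f : pt -> R) p : continuous f -> 0 < f p -> nbhs p [set x | 0 < f x].
Proof. by move=> cf fp; apply: open_nbhs_nbhs; split => //; exact: open_gt0. Qed.

(* The sign condition puts [u] and [z] on opposite sides of the line [q w]. *)
Lemma halfopen_tri_spoke_nbhs (q u w z : pt) (t : R) :
  0 < orient q u w * orient q w z -> 0 < t < 1 ->
  nbhs (q + t *: (w - q)) (halfopen_tri q u w `|` halfopen_tri q w z).
Proof.
move=> o12 /andP[t0 t1].
have o1 : orient q u w != 0 by apply: contraTneq o12 => ->; rewrite mul0r ltxx.
have o2 : orient q w z != 0 by apply: contraTneq o12 => ->; rewrite mulr0 ltxx.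
set p := q + t *: (w - q).
have [p1 p2] : bary1 q u w p = 0 /\ bary2 q u w p = t by apply: (bary_unique o1); rewrite /p; pt_field.
have [p3 p4] : bary1 q w z p = t /\ bary2 q w z p = 0 by apply: (bary_unique o2); rewrite /p; pt_field.
have n1 : nbhs p [set x | 0 < bary2 q u w x].
  by apply: nbhs_gt0; [exact: continuous_bary2|rewrite p2].
have n2 : nbhs p [set x | 0 < bary1 q w z x].
  by apply: nbhs_gt0; [exact: continuous_bary1|rewrite p3].
have n3 : nbhs p [set x | 0 < 1 - bary1 q u w x - bary2 q u w x].
  by apply: nbhs_gt0; [exact: continuous_bary0|rewrite p1 p2; lra].
have n4 : nbhs p [set x | 0 < 1 - bary1 q w z x - bary2 q w z x].
  by apply: nbhs_gt0; [exact: continuous_bary0|rewrite p3 p4; lra].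
apply: filterS (filterI (filterI n1 n2) (filterI n3 n4)) => x [[/= x1 x2] [/= x3 x4]].
have [xl|xr] := leP 0 (bary1 q u w x); first by left; split; rewrite // ?ltW //; lra.
right; split; rewrite ?ltW //; last by lra.
have opp : bary2 q w z x * orient q w z = - (bary1 q u w x * orient q u w).
  by rewrite bary1_orient // bary2_orient // /cross; ring.
nra.
Qed.

Section Fan.
Variables (q : pt) (v : 'I_4 -> pt).
Local Notation o j := (orient q (v j) (v (succ4 j))).
Hypothesis same_orient : forall i j, 0 < o i * o j.

Let o_neq0 j : o j != 0.
Proof. by apply: contraTneq (same_orient j j) => ->; rewrite mul0r ltxx. Qed.

Let fan := \bigcup_j halfopen_tri q (v j) (v (succ4 j)).

Let fan_apex_nbhs : nbhs q fan.
Proof.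
have near1 j : nbhs q [set x | 0 < 1 - bary1 q (v j) (v (succ4 j)) x
                                  - bary2 q (v j) (v (succ4 j)) x].
  by apply: nbhs_gt0; [exact: continuous_bary0|have [-> ->] := bary_apex (o_neq0 j); lra].
apply: filterS (filter_forall _ near1) => x /= x1.
have turn j : 0 < o ord0 * cross (v j - q) (v (succ4 j) - q) by exact: same_orient.
have [j [cj cj1]] := cones_cover turn (x - q).
exists j => //; split; last by have := x1 j; lra.
- have := bary1_orient (o_neq0 j) x; have := same_orient ord0 j.
  have -> : cross (x - q) (v (succ4 j) - q) = - cross (v (succ4 j) - q) (x - q).
    by rewrite /cross; ring.
  nra.
- have := bary2_orient (o_neq0 j) x; have := same_orient ord0 j; nra.
Qed.

Let open_fan : open fan.
Proof.
rewrite openE => p [j _ [h1 h2 h3]]; rewrite /interior.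
have := baryE (o_neq0 j) p.
have [e1|p1] := eqVneq (bary1 q (v j) (v (succ4 j)) p) 0;
  have [e2|p2] := eqVneq (bary2 q (v j) (v (succ4 j)) p) 0.
- by rewrite e1 e2 !scale0r !addr0 => ->; exact: fan_apex_nbhs.
- rewrite e1 scale0r addr0 => ->.
  apply: filterS (halfopen_tri_spoke_nbhs (same_orient j (succ4 j)) _).
    by move=> x [hx|hx]; [exists j|exists (succ4 j)].
  by rewrite lt_def p2 h2 /=; lra.
- rewrite e2 scale0r addr0 => ->.
  have ojj := same_orient (succ4 (succ4 (succ4 j))) j.
  rewrite succ4K in ojj.
  apply: filterS (halfopen_tri_spoke_nbhs ojj _).
    by move=> x [hx|hx]; [exists (succ4 (succ4 (succ4 j)))|exists j]; rewrite // succ4K.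
  by rewrite lt_def p1 h1 /=; lra.
- move=> _; have pin : open_tri q (v j) (v (succ4 j)) p.
    by split; rewrite // lt_def ?p1 ?p2.
  apply: filterS (open_nbhs_nbhs (conj (@open_open_tri _ _ _) pin)).
  by move=> x /open_halfopen_tri hx; exists j.
Qed.

Lemma same_orient_not_outer_face : ~ outer_face (drawing (cycle_ends v)) q.
Proof.
move=> /subset_closure; apply: (enclosed_not_outer (O := fan)
  (K := \bigcup_j closed_tri q (v j) (v (succ4 j)))).
- exact: open_fan.
- by apply: closed_bigcup => [|j _]; [exact: finite_finset|exact: closed_closed_tri].
- by apply: bounded_pts_bigcup => j; exact: closed_tri_bounded.
- by move=> x [j _ /halfopen_closed_tri hx]; exists j.
- move=> x [[j _ [h1 h2 h3]] nDx]; exists j => //; split => //.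
  rewrite lt_neqAle h3 andbT; apply/eqP => e; apply: nDx; exists j.
  by apply: (seg_base (o_neq0 j)) => //; apply/andP; split; lra.
- by exists ord0 => //; have [e1 e2] := bary_apex (o_neq0 ord0); split; rewrite ?e1 ?e2 //; lra.
Qed.

End Fan.

Lemma open_tri_not_closure_outer (D : set pt) q x y : orient q x y != 0 ->
  seg q x `<=` D -> seg q y `<=` D -> seg x y `<=` D ->
  forall p, open_tri q x y p -> ~ closure (outer_face D) p.
Proof.
move=> o0 Dx Dy Dxy; apply: (enclosed_not_outer (K := closed_tri q x y)).
- exact: open_open_tri.
- exact: closed_closed_tri.
- exact: closed_tri_bounded.
- exact: open_closed_tri.
move=> p [Kp nDp]; apply: contrapT => nOp; apply: nDp.
by case: (closed_tri_boundary o0 Kp nOp) => [/Dx|/Dy|/Dxy].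
Qed.

Lemma planar_sl_meet (E : Type) (ends : E -> pt * pt) e f x : planar_sl ends -> e <> f ->
  seg (ends e).1 (ends e).2 x -> seg (ends f).1 (ends f).2 x ->
  (x = (ends e).1 \/ x = (ends e).2) /\ (x = (ends f).1 \/ x = (ends f).2).
Proof.
move=> pl ef ex fx.
by have : (seg (ends e).1 (ends e).2 `&` seg (ends f).1 (ends f).2) x by []; rewrite pl.
Qed.

Definition encloses_far_edge (a : 'I_4 -> pt) (q : pt) (k : 'I_4) : Prop :=
  open_tri q (a k) (a (succ4 k)) (a (succ4 (succ4 k))) /\
  open_tri q (a k) (a (succ4 k)) (a (succ4 (succ4 (succ4 k)))).

Section Quadrilateral.
Variable a : 'I_4 -> pt.
Hypotheses (a_inj : injective a) (cycle_planar : planar_sl (cycle_ends a)).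
Local Notation s := succ4.

Lemma opposite_edges_disjoint j x :
  seg (a j) (a (s j)) x -> seg (a (s (s j))) (a (s (s (s j)))) x -> False.
Proof.
have [_ ne d03] := succ4_neq j; have [d12 d13 _] := succ4_neq (s j).
move=> /(planar_sl_meet cycle_planar ne) /[apply] /= -[].
by case=> -> [] /a_inj.
Qed.

Section Wheel.
Variable q : pt.
Hypotheses (wheel_planar : planar_sl (wheel_ends a q)) (q_not_vertex : forall i, q <> a i).
Local Notation o j := (orient q (a j) (a (s j))).
Local Notation tri j := (open_tri q (a j) (a (s j))).

Lemma spokes_meet i i' x : i <> i' -> seg q (a i) x -> seg q (a i') x -> x = q.
Proof.
move=> ii'; have ne : (inr i : 'I_4 + 'I_4) <> inr i' by case.
move=> /(planar_sl_meet wheel_planar ne) /[apply] /= -[[->|->] //].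
by case=> // /a_inj.
Qed.

Lemma spoke_edge_meet i j x : seg q (a i) x -> seg (a j) (a (s j)) x ->
  x = a i /\ (i = j \/ i = s j).
Proof.
have ne : (inr i : 'I_4 + 'I_4) <> inl j by [].
move=> /(planar_sl_meet wheel_planar ne) /[apply] /= -[[->|->]].
  by case=> /q_not_vertex.
by move=> h; split=> //; case: h => /a_inj; [left|right].
Qed.

Lemma spokes_not_aligned i i' (c : R) : i <> i' -> 0 < c -> a i' - q = c *: (a i - q) ->
  False.
Proof.
move=> ii' c0 /(same_ray_seg c0) [].
  by move=> /spokes_meet-/(_ i' ii' (seg_end _ _)) /esym /q_not_vertex.
by move=> /spokes_meet-/(_ i (nesym ii') (seg_end _ _)) /esym /q_not_vertex.
Qed.

Lemma orient_spoke_neq0 j : o j != 0.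
Proof.
have ajq : a j != q by apply/eqP => /esym /q_not_vertex.
have [sj _ _] := succ4_neq j.
apply/eqP => /(collinear_seg ajq) [].
- by move=> /(spoke_edge_meet (seg_start q (a j))) [/q_not_vertex].
- by move=> /spokes_meet-/(_ (s j) sj (seg_end _ _)) /esym /q_not_vertex.
- by move=> /spokes_meet-/(_ j (nesym sj) (seg_end _ _)) /esym /q_not_vertex.
Qed.

Lemma open_tri_vertex j i : i <> j -> i <> s j ->
  0 < bary1 q (a j) (a (s j)) (a i) -> 0 < bary2 q (a j) (a (s j)) (a i) -> tri j (a i).
Proof.
move=> ij isj b1 b2; apply: open_tri_of_bary_gt0 => //; first exact: orient_spoke_neq0.
by move=> p /spoke_edge_meet /[apply] -[_ []].
Qed.

Lemma far_edge_in_or_out j : tri j (a (s (s j))) <-> tri j (a (s (s (s j)))).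
Proof.
have o0 := orient_spoke_neq0 j.
have [_ d02 d03] := succ4_neq j; have [d12 d13 _] := succ4_neq (s j).
have SKO : seg (a (s (s j))) (a (s (s (s j)))) `&` closed_tri q (a j) (a (s j)) `<=` tri j.
  move=> p [Sp Kp]; apply: contrapT => nOp.
  case: (closed_tri_boundary o0 Kp nOp) => [/spoke_edge_meet|/spoke_edge_meet|/opposite_edges_disjoint].
  - by move=> /(_ _ Sp) [_ []].
  - by move=> /(_ _ Sp) [_ []].
  - exact.
have [in_tri|out_tri] := connected_in_or_out (@connected_seg _ _) (@open_open_tri _ _ _)
  (@closed_closed_tri _ _ _) (@open_closed_tri _ _ _) SKO.
  by split=> _; apply: in_tri; [exact: seg_end|exact: seg_start].
by split=> /[dup] + /out_tri; [move=> _ /(_ (seg_start _ _))|move=> _ /(_ (seg_end _ _))].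
Qed.

Lemma encloses_of_sign_change j : o j * o (s j) < 0 ->
  encloses_far_edge a q j \/ encloses_far_edge a q (s j).
Proof.
move=> hj; have oj := orient_spoke_neq0 j; have osj := orient_spoke_neq0 (s j).
have [d01 d02 d03] := succ4_neq j; have [d12 _ _] := succ4_neq (s j).
set X := bary1 q (a j) (a (s j)) (a (s (s j))).
set Y := bary2 q (a j) (a (s j)) (a (s (s j))).
have X0 : 0 < X.
  have : X * o j = - o (s j) by rewrite bary1_orient // /orient /cross; ring.
  nra.
have hY : Y * o j = cross (a j - q) (a (s (s j)) - q) by exact: bary2_orient.
have [Yneg|Ypos|Y0] := ltgtP Y 0.
- right; have h : tri (s j) (a (s (s (s (s j))))).
    rewrite succ4K; apply: open_tri_vertex => //.
      have : bary1 q (a (s j)) (a (s (s j))) (a j) * o (s j) = Y * o j.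
        by rewrite bary1_orient // hY.
      nra.
    have : bary2 q (a (s j)) (a (s (s j))) (a j) * o (s j) = - o j.
      by rewrite bary2_orient // /orient /cross; ring.
    nra.
  by split=> //; apply/far_edge_in_or_out.
- left; have h : tri j (a (s (s j))) by apply: open_tri_vertex => // /nesym.
  by split=> //; apply/far_edge_in_or_out.
- exfalso; apply: (spokes_not_aligned d02 X0).
  by rewrite {1}(baryE oj (a (s (s j)))) -/X -/Y Y0 scale0r addr0 addrC addKr.
Qed.

Lemma encloses_or_same_orient :
  (exists j, encloses_far_edge a q j) \/ (forall i j, 0 < o i * o j).
Proof.
case: (pselect (exists j, o j * o (s j) < 0)) => [[j /encloses_of_sign_change[]]|none].
- by left; exists j.
- by left; exists (s j).
right; have pos j : 0 < o j * o (s j).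
  rewrite lt_def mulf_neq0 ?orient_spoke_neq0 //= leNgt; apply/negP => neg.
  by apply: none; exists j.
have pos0 : forall k, 0 < o ord0 * o k.
  have := pos ord0; have := pos (s ord0); have := pos (s (s ord0)).
  by move=> ? ? ? k; case: (ord4_succ_cases ord0 k) => ->; nra.
by move=> i j; have := pos0 i; have := pos0 j; have := pos0 ord0; nra.
Qed.

Lemma edge_midpoint_open_tri j k : encloses_far_edge a q j -> k <> j ->
  tri j (2^-1 *: (a k + a (s k))).
Proof.
move=> [h2 h3] kj; have oj := orient_spoke_neq0 j.
case: (ord4_succ_cases j k) => // ->.
- exact: open_tri_midpoint (closed_tri_y oj) h2.
- exact: open_tri_midpoint (open_closed_tri h2) h3.
- by rewrite succ4K addrC; exact: open_tri_midpoint (closed_tri_x oj) h3.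
Qed.

Lemma encloses_of_good k : outer_face (drawing (cycle_ends a)) q ->
  seg (a k) (a (s k)) `<=` closure (outer_face (drawing (wheel_ends a q))) ->
  encloses_far_edge a q k.
Proof.
move=> out clos.
have [[j hj]|same] := encloses_or_same_orient; last by case: (same_orient_not_outer_face same out).
case: (pselect (k = j)) => [->//|kj]; exfalso.
apply: (open_tri_not_closure_outer (orient_spoke_neq0 j) _ _ _
  (edge_midpoint_open_tri hj kj) (clos _ (seg_midpoint _ _))) => x hx.
- by exists (inr j).
- by exists (inr (s j)).
- by exists (inl j).
Qed.

End Wheel.
End Quadrilateral.

End PlaneGeometry.

Lemma good_edge_encloses (R : realType) (a : 'I_4 -> R * R) k :
  simple_quadrilateral a -> good_edge a k ->
  exists q, orient q (a k) (a (succ4 k)) != 0 /\ encloses_far_edge a q k.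
Proof.
move=> [a_inj cycle_planar] [q [out [q_not_vertex [wheel_planar clos]]]].
by exists q; split; [exact: orient_spoke_neq0|exact: encloses_of_good].
Qed.

Lemma opposite_edges_not_good (R : realType) (a : 'I_4 -> R * R) k :
  simple_quadrilateral a -> good_edge a k -> good_edge a (succ4 (succ4 k)) -> False.
Proof.
move=> sq /(good_edge_encloses sq) [q [oq [h2 h3]]].
move=> /(good_edge_encloses sq) [q' [oq' [g2 g3]]]; rewrite !succ4K in g2 g3.
have [s [t [s0 t0 E1]]] := cevians_meet oq h2 h3.
have [u [v [u0 v0 E2]]] := cevians_meet oq' g2 g3.
have K : cross (a (succ4 (succ4 (succ4 k))) - a k) (a (succ4 (succ4 k)) - a (succ4 k)) != 0.
  apply: contraNneq (open_tri_cross oq h2) => K0.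
  by rewrite -(cross_line_meet E1) K0 mulr0.
have E2' : a k + (1 - v) *: (a (succ4 (succ4 (succ4 k))) - a k) =
           a (succ4 k) + (1 - u) *: (a (succ4 (succ4 k)) - a (succ4 k)).
  have -> : a k + (1 - v) *: (a (succ4 (succ4 (succ4 k))) - a k) =
      a (succ4 (succ4 (succ4 k))) + v *: (a k - a (succ4 (succ4 (succ4 k)))) by pt_field.
  by rewrite -E2; pt_field.
have [es et] := line_param_unique K E1 E2'.
case: sq => a_inj cycle_planar.
apply: (opposite_edges_disjoint a_inj cycle_planar (j := succ4 k)
  (x := a (succ4 k) + t *: (a (succ4 (succ4 k)) - a (succ4 k)))).
  by apply/segP; exists t => //; apply/andP; split; lra.
rewrite succ4K -E1; apply/segP; exists (1 - s); first by apply/andP; split; lra.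
by pt_field.
Qed.

Theorem lemma8 (R : realType) (a : 'I_4 -> R * R) :
  simple_quadrilateral a ->
  forall i j k : 'I_4, good_edge a i -> good_edge a j -> good_edge a k ->
    i = j \/ j = k \/ i = k.
Proof.
move=> sq i j k gi gj gk.
have [->|ij] := eqVneq i j; first by left.
have [->|jk] := eqVneq j k; first by right; left.
have [->|ik] := eqVneq i k; first by right; right.
exfalso; case/or3P: (ord4_three_opposite ij jk ik) => /eqP e.
- by apply: (opposite_edges_not_good sq gi); rewrite -e.
- by apply: (opposite_edges_not_good sq gi); rewrite -e.
- by apply: (opposite_edges_not_good sq gj); rewrite -e.
Qed.
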